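(* The strong substitutes property is not sufficient to guarantee that a Walrasian equilibrium on the original items is a price-match equilibrium: there exists a combinatorial auction in which every bidder's valuation satisfies the strong substitutes property and a Walrasian equilibrium on the original items exists, but no Walrasian equilibrium on the original items is a price-match equilibrium.
   Context: Combinatorial auction: item types $j$ with supply $c_j\in\mathbb Z_{\ge1}$; bidders $\mathcal I$ with valuations $v_i$ on bundles $a\in\mathbb Z^J_{\ge0}$, $a\le c$ (normalized, monotone), expressed as bids (bundle, amount) with at most one accepted bid per bidder; bids are truthful. A feasible allocation assigns disjoint-supply-respecting bundles; $x^*$ is an efficient allocation with bundles $a^{i*}$. Linear prices $p\in\mathbb R^J_{\ge0}$; a Walrasian equilibrium on the original items (no artificial items) is $(x^*,p)$ such that each bidder's bundle $a^{i*}$ maximizes $v_i(a)-p\,a$ over bundles, and $p_j=0$ for any item in excess supply under $x^*$. It is a price-match equilibrium if for every bidder $i$ there is a feasible allocation of bundles to the other bidders (one accepted bid each) such that each of them has value at least the price of her bundle, and the total price of the allocated bundles equals $\sum_{i}p\,a^{i*}$. A valuation satisfies gross substitutes (for unique items) if for price vectors $p\le q$ and any $S$ in the demand set at $p$ there is $T$ in the demand set at $q$ containing every $j\in S$ with $p_j=q_j$; it satisfies strong substitutes if it satisfies gross substitutes when every unit of every item type is treated as a distinct item. *)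

From HB Require Import structures.
From mathcomp Require Import all_boot all_order all_algebra.
From mathcomp Require Import reals.
Set Implicit Arguments. Unset Strict Implicit. Unset Printing Implicit Defensive.
Import Order.TTheory GRing.Theory Num.Theory.
Local Open Scope ring_scope.

Section Auction.
Variable R : realType.

Definition set_demand (U : finType) (v : {set U} -> R) (q : U -> R) (S : {set U}) :=
  forall T : {set U}, v T - \sum_(u in T) q u <= v S - \sum_(u in S) q u.

Definition gross_substitutes (U : finType) (v : {set U} -> R) :=
  forall q q' : U -> R, (forall u, 0 <= q u) -> (forall u, q u <= q' u) ->
  forall S, set_demand v q S ->
  exists T, set_demand v q' T /\ (forall u, u \in S -> q u = q' u -> u \in T).

Variable J : finType.
Variable c : J -> nat.

Definition bundle := {ffun J -> nat}.
Definition bundle_le (a b : bundle) := forall j, (a j <= b j)%N.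
Definition bundle_leb (a b : bundle) : bool := [forall j, (a j <= b j)%N].
Definition cap : bundle := [ffun j => c j].
Definition zero_bundle : bundle := [ffun _ => 0%N].

(* Units: each unit of each item type treated as a distinct item. *)
Definition unit_item := {j : J & 'I_(c j)}.
Definition count_bundle (S : {set unit_item}) : bundle :=
  [ffun j => #|[set u in S | tag u == j]|].

Definition strong_substitutes (v : bundle -> R) :=
  gross_substitutes (fun S : {set unit_item} => v (count_bundle S)).

Definition price (p : J -> R) (a : bundle) : R := \sum_j p j * (a j)%:R.

Variable I : finType.
Variable bids : I -> seq (bundle * R).

(* XOR valuation expressed by the bids (at most one accepted bid). *)
Definition xorval (i : I) (a : bundle) : R :=
  \big[Num.max/0]_(bx <- bids i | bundle_leb bx.1 a) bx.2.

Definition well_formed_auction :=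
  (forall j, (0 < c j)%N) /\
  (forall i bx, bx \in bids i -> bundle_le bx.1 cap) /\
  (forall i, xorval i zero_bundle = 0) /\
  (forall i a b, bundle_le a b -> xorval i a <= xorval i b) /\
  (forall i bx, bx \in bids i -> xorval i bx.1 = bx.2).

Definition feasible (x : I -> bundle) := forall j, (\sum_i x i j <= c j)%N.

Definition welfare (x : I -> bundle) : R := \sum_i xorval i (x i).

Definition efficient (x : I -> bundle) :=
  feasible x /\ forall y, feasible y -> welfare y <= welfare x.

Definition walrasian_eq (x : I -> bundle) (p : J -> R) :=
  efficient x /\ (forall j, 0 <= p j) /\
  (forall i a, bundle_le a cap ->
     xorval i a - price p a <= xorval i (x i) - price p (x i)) /\
  (forall j, (\sum_i x i j < c j)%N -> p j = 0).

Definition price_match (x : I -> bundle) (p : J -> R) :=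
  forall i, exists y : I -> bundle,
    feasible y /\ y i = zero_bundle /\
    (forall k, k != i ->
       (y k = zero_bundle \/ exists amt, (y k, amt) \in bids k) /\
       price p (y k) <= xorval k (y k)) /\
    \sum_k price p (y k) = \sum_k price p (x k).

End Auction.

(* One item type in supply 2 and two bidders: an additive bidder valuing each
   unit at 2, and a unit-demand bidder valuing a single unit at 1.  Both
   valuations are strong substitutes.  Efficiency gives both units to the
   additive bidder, and a Walrasian price p must satisfy p >= 1, otherwise the
   unit-demand bidder would buy.  Price matching for the additive bidder
   requires the other bidder to be allocated one of her bids at total price
   2p, yet her only bid is for a single unit, worth p < 2p. *)
From HB Require Import structures.
From mathcomp Require Import all_boot all_order all_algebra.
From mathcomp Require Import reals.
From mathcomp Require Import lra zify.
Set Implicit Arguments. Unset Strict Implicit. Unset Printing Implicit Defensive.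
Import Order.TTheory GRing.Theory Num.Theory.
Local Open Scope ring_scope.

Section GrossSubstitutes.
Variables (R : realType) (U : finType).
Implicit Types (v w : {set U} -> R) (q : U -> R).

Lemma set_demand_exists v q : exists S, set_demand v q S.
Proof.
have [S _ maxS] := @arg_maxP _ _ {set U} set0 predT
  (fun S => v S - \sum_(u in S) q u) erefl.
by exists S => T; apply: maxS.
Qed.

Lemma eq_gross_substitutes v w : v =1 w ->
  gross_substitutes v -> gross_substitutes w.
Proof.
move=> vw gsv q q' q_ge0 le_qq' S demS.
have demvS : set_demand v q S by move=> T; rewrite !vw; apply: demS.
have [T [demT keepT]] := gsv q q' q_ge0 le_qq' S demvS.
by exists T; split=> // T'; rewrite -!vw; apply: demT.
Qed.

Lemma additive_gross_substitutes (a : U -> R) :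
  gross_substitutes (fun S => \sum_(u in S) a u).
Proof.
move=> q q' _ _ S demS.
have surplusE r (T : {set U}) :
    \sum_(u in T) a u - \sum_(u in T) r u = \sum_(u in T) (a u - r u).
  by rewrite sumrB.
exists [set u | 0 <= a u - q' u]; split=> [T|u Su qq'u].
  rewrite !surplusE [leRHS]big_mkcond [leLHS]big_mkcond /=.
  apply: ler_sum => u _; rewrite inE.
  by case: (u \in T); case: (lerP 0 (a u - q' u)) => // /ltW.
rewrite inE -qq'u.
by have := demS (S :\ u); rewrite !surplusE (big_setD1 u Su) /= -subr_ge0 addrK.
Qed.

Lemma unit_demand_gross_substitutes (b : R) :
  gross_substitutes (fun S : {set U} => if S == set0 then 0 else b).
Proof.
move=> q q' q_ge0 le_qq' S demS.
set v := fun S : {set U} => if S == set0 then 0 else b.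
set Seq := [set u in S | q u == q' u].
have SeqP u : u \in S -> q u = q' u -> u \in Seq.
  by move=> Su qq'u; rewrite inE Su qq'u eqxx.
have [Seq0 | Seq_neq0] := eqVneq Seq set0.
  have [T demT] := set_demand_exists v q'.
  by exists T; split=> // u Su /(SeqP u Su); rewrite Seq0 inE.
exists Seq; split=> // T.
have sub_SeqS : Seq \subset S by apply/subsetP=> u; rewrite inE => /andP[].
have S_neq0 : S != set0.
  by apply: contraNneq Seq_neq0 => S0; apply/eqP/setP=> u; rewrite !inE S0 inE.
have qSeq : \sum_(u in Seq) q' u = \sum_(u in Seq) q u.
  by apply: eq_bigr => u; rewrite inE => /andP[_ /eqP].
apply: le_trans (le_trans (demS T) _); first by rewrite lerB // ler_sum.
rewrite /v (negbTE Seq_neq0) (negbTE S_neq0) lerB // qSeq.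
rewrite [leRHS](big_setID Seq) /= (setIidPr sub_SeqS).
by rewrite lerDl sumr_ge0.
Qed.

End GrossSubstitutes.

Lemma card_unit_item (J : finType) (c : J -> nat) :
  #|{: unit_item c}| = (\sum_j c j)%N.
Proof.
rewrite card_tagged sumnE big_map big_enum.
by apply: eq_bigr => j _; rewrite card_ord.
Qed.

Section OneItemType.
Variables (R : realType) (c : unit -> nat).

Lemma count_bundle_unit (S : {set unit_item c}) : count_bundle S tt = #|S|.
Proof. by rewrite ffunE; apply: eq_card => -[[] i]; rewrite inE eqxx andbT. Qed.

Lemma card_set_unit_item (S : {set unit_item c}) : (#|S| <= c tt)%N.
Proof.
by rewrite (leq_trans (max_card S)) // card_unit_item (big_pred1 tt) // => -[].
Qed.

Lemma price_unit (p : unit -> R) (a : bundle unit) :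
  price p a = p tt * (a tt)%:R.
Proof. by rewrite /price (big_pred1 tt) // => -[]. Qed.

End OneItemType.

Section Example.
Variable R : realType.

Definition units (k : nat) : bundle unit := [ffun=> k].

Definition ex_cap : unit -> nat := fun=> 2%N.

(* Bidder [true] is the additive bidder, bidder [false] the unit-demand one. *)
Definition ex_bids : bool -> seq (bundle unit * R) := fun i =>
  if i then [:: (units 1, 2%:R); (units 2, 4%:R)] else [:: (units 1, 1)].

Definition ex_alloc : bool -> bundle unit := fun i => units (if i then 2 else 0).

Lemma bundle_leb_units k (a : bundle unit) : bundle_leb (units k) a = (k <= a tt)%N.
Proof. by apply/forallP/idP => [/(_ tt)|le_ka []]; rewrite ffunE. Qed.

Lemma xorval_unit_demand a : xorval ex_bids false a = (minn (a tt) 1)%:R.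
Proof.
rewrite /xorval big_cons big_nil bundle_leb_units.
by case: (a tt) => [|n] //=; rewrite max_l ?ler01 // (minn_idPr (ltn0Sn n)).
Qed.

Lemma xorval_additive a : xorval ex_bids true a = (2 * minn (a tt) 2)%:R.
Proof.
rewrite /xorval !big_cons big_nil !bundle_leb_units.
case: (a tt) => [|[|n]] //=.
  by rewrite max_l ?ler0n.
by rewrite (max_l (ler0n _ 4)) max_r ?ler_nat // (minn_idPr (leq_addl n 2)).
Qed.

Lemma ex_welfare y :
  welfare ex_bids y = (2 * minn (y true tt) 2 + minn (y false tt) 1)%:R.
Proof. by rewrite /welfare big_bool xorval_additive xorval_unit_demand natrD. Qed.

Lemma ex_feasibleP y : feasible ex_cap y <-> (y true tt + y false tt <= 2)%N.
Proof. by rewrite /feasible; split=> [/(_ tt)|le_y2 []]; rewrite big_bool. Qed.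

Lemma ex_bidsP i bx : bx \in ex_bids i ->
  exists2 k, (k <= 2)%N & bx = (units k, xorval ex_bids i (units k)).
Proof.
case: i; rewrite !inE.
  by case/orP=> /eqP ->; [exists 1%N | exists 2%N]; rewrite // xorval_additive ffunE.
by move=> /eqP ->; exists 1%N; rewrite // xorval_unit_demand ffunE.
Qed.

Lemma ex_well_formed : well_formed_auction ex_cap ex_bids.
Proof.
split=> //; split; first by move=> i bx /ex_bidsP[k le_k2 ->] []; rewrite !ffunE.
split; first by case; rewrite ?xorval_additive ?xorval_unit_demand ffunE.
split; last by move=> i bx /ex_bidsP[k _ ->].
move=> [] a b /(_ tt);
  rewrite ?xorval_additive ?xorval_unit_demand ler_nat; move: (a tt) (b tt); lia.
Qed.

Lemma ex_strong_substitutes i : strong_substitutes ex_cap (xorval ex_bids i).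
Proof.
case: i; rewrite /strong_substitutes.
  apply: (eq_gross_substitutes _ (additive_gross_substitutes (a := fun=> 2%:R))) => S.
  rewrite xorval_additive count_bundle_unit sumr_const.
  have /minn_idPl -> : (#|S| <= 2)%N := card_set_unit_item S.
  by rewrite natrM mulr_natr.
apply: (eq_gross_substitutes _ (unit_demand_gross_substitutes (b := 1))) => S.
rewrite xorval_unit_demand count_bundle_unit.
have [-> | S_neq0] := eqVneq S set0; first by rewrite cards0.
by have /minn_idPr -> : (1 <= #|S|)%N by rewrite card_gt0.
Qed.

Lemma ex_alloc_efficient : efficient ex_cap ex_bids ex_alloc.
Proof.
split=> [|y /ex_feasibleP]; first by apply/ex_feasibleP; rewrite !ffunE.
by rewrite !ex_welfare !ffunE ler_nat; move: (y true tt) (y false tt); lia.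
Qed.

Lemma efficient_ex_allocE x : efficient ex_cap ex_bids x ->
  x true tt = 2%N /\ x false tt = 0%N.
Proof.
move=> [/ex_feasibleP feas_x /(_ _ (proj1 ex_alloc_efficient))].
rewrite !ex_welfare !ffunE ler_nat.
by move: (x true tt) (x false tt) feas_x; lia.
Qed.

Lemma ex_walrasian : walrasian_eq ex_cap ex_bids ex_alloc (fun=> 1).
Proof.
split; first exact: ex_alloc_efficient.
split=> //; split; last by move=> j; rewrite big_bool !ffunE.
move=> [] a /(_ tt); rewrite !ffunE /ex_cap => le_a2;
  rewrite ?xorval_additive ?xorval_unit_demand !price_unit !mul1r !ffunE.
  rewrite (minn_idPl le_a2) minnn !natrM.
  have : (a tt)%:R <= 2 :> R by rewrite ler_nat.
  lra.
by rewrite (minn_idPl (leq0n 1)) subr0 subr_le0 ler_nat geq_minl.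
Qed.

Lemma walrasian_price_ge1 x p : walrasian_eq ex_cap ex_bids x p -> 1 <= p tt.
Proof.
move=> [eff_x [_ [util_x _]]].
have [_ x_false] := efficient_ex_allocE eff_x.
have units1_le_cap : bundle_le (units 1) (cap ex_cap) by case; rewrite !ffunE.
have := util_x false _ units1_le_cap.
rewrite !xorval_unit_demand !price_unit x_false !ffunE.
rewrite minnn (minn_idPl (leq0n 1)) mulr0 mulr1.
lra.
Qed.

Lemma ex_not_price_match x p :
  walrasian_eq ex_cap ex_bids x p -> ~ price_match ex_cap ex_bids x p.
Proof.
move=> walras_xp /(_ true) [y [_ [y_true [/(_ false erefl) [y_false _] sum_y]]]].
have p_ge1 := walrasian_price_ge1 walras_xp.
have [x_true x_false] := efficient_ex_allocE (proj1 walras_xp).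
have y_false_le1 : (y false tt)%:R <= 1 :> R.
  case: y_false => [->|[amt]]; last rewrite inE => /eqP[->].
    by rewrite ffunE ler01.
  by rewrite ffunE.
move: sum_y; rewrite !big_bool /= !price_unit y_true x_true x_false ffunE.
have : 0 <= (y false tt)%:R :> R by apply: ler0n.
nra.
Qed.

End Example.

Theorem corollary4 (R : realType) :
  exists (J I : finType) (c : J -> nat) (bids : I -> seq (bundle J * R)),
    well_formed_auction c bids /\
    (forall i, strong_substitutes c (xorval bids i)) /\
    (exists x p, walrasian_eq c bids x p) /\
    (forall x p, walrasian_eq c bids x p -> ~ price_match c bids x p).
Proof.
exists unit, bool, ex_cap, (ex_bids R).
split; first exact: ex_well_formed.
split; first exact: ex_strong_substitutes.
split; first by exists ex_alloc, (fun=> 1); apply: ex_walrasian.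
exact: ex_not_price_match.
Qed.
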